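(* Let $d \ge 2$ and let $v_1,\ldots,v_m \in \mathbb{R}^d$ with $m \ge d$. Let $M$ be the minimum covering sphere of $\{v_1,\ldots,v_m\}$. Let $p_1, p_2 \in \mathbb{R}^d$ be two points lying outside $M$ (i.e. outside the closed ball bounded by $M$) such that the segment $\overline{p_1p_2}$ intersects the convex hull $\operatorname{conv}(\{v_1,\ldots,v_m\})$. Assume the point set $\{v_1,\ldots,v_m,p_1,p_2\}$ is in general position. Then there is no witness sphere of the segment $\overline{p_1p_2}$ with respect to the point set $\{v_1,\ldots,v_m,p_1,p_2\}$; that is, there is no sphere $W \subset \mathbb{R}^d$ with $p_1,p_2 \in W$ whose open interior contains none of the points $v_1,\ldots,v_m$.
   Context: The minimum covering sphere of a non-empty finite set $\{v_1,\ldots,v_m\}\subset\mathbb{R}^d$ is the smallest sphere such that every $v_i$ lies inside it or on it. A witness sphere of a segment (or, more generally, of a simplex) with respect to a finite point set $P$ is a sphere that contains all vertices of the segment on its boundary and contains no point of $P$ in its interior. A finite point set in $\mathbb{R}^d$ is in general position if for each $i=1,\ldots,d$ no $i+1$ of its points lie in an affine subspace of dimension $i-1$, and no $d+2$ of its points lie on a common sphere. *)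

From HB Require Import structures.
From mathcomp Require Import all_boot all_order all_algebra.
From mathcomp Require Import reals.
Set Implicit Arguments. Unset Strict Implicit. Unset Printing Implicit Defensive.
Import Order.TTheory GRing.Theory Num.Theory.
Local Open Scope ring_scope.

Section Geometry.
Variables (R : realType) (d : nat).
Local Notation pt := 'rV[R]_d.

Definition sqdist (x y : pt) : R := \sum_(k < d) (x ord0 k - y ord0 k) ^+ 2.

Definition covers (m : nat) (v : 'I_m -> pt) (c : pt) (r : R) : Prop :=
  0 <= r /\ forall i, sqdist (v i) c <= r ^+ 2.

Definition min_covering_sphere (m : nat) (v : 'I_m -> pt) (c : pt) (r : R) : Prop :=
  covers v c r /\ forall c' r', covers v c' r' -> r <= r'.

Definition in_affine_subspace (s : seq pt) (k : nat) : Prop :=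
  exists (o : pt) (B : 'M[R]_(k, d)),
    forall x, x \in s -> exists c : 'rV[R]_k, x = o + c *m B.

Definition on_common_sphere (s : seq pt) : Prop :=
  exists (w : pt) (rr : R), 0 < rr /\ forall x, x \in s -> sqdist x w = rr.

Definition general_position (A : pt -> Prop) : Prop :=
  (forall (i : nat) (s : seq pt), (1 <= i <= d)%N -> uniq s ->
     size s = i.+1 -> (forall x, x \in s -> A x) ->
     ~ in_affine_subspace s i.-1) /\
  (forall s : seq pt, uniq s -> size s = d.+2 -> (forall x, x \in s -> A x) ->
     ~ on_common_sphere s).

Definition segment_meets_hull (m : nat) (v : 'I_m -> pt) (p1 p2 : pt) : Prop :=
  exists t : R, 0 <= t <= 1 /\
  exists lam : 'I_m -> R, (forall i, 0 <= lam i) /\ \sum_i lam i = 1 /\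
    (1 - t) *: p1 + t *: p2 = \sum_i lam i *: v i.

Definition witness_sphere (P : pt -> Prop) (p1 p2 : pt) (w : pt) (rho : R) : Prop :=
  0 < rho /\ sqdist p1 w = rho ^+ 2 /\ sqdist p2 w = rho ^+ 2 /\
  forall x, P x -> ~ (sqdist x w < rho ^+ 2).

End Geometry.

(** The difference [x |-> |x - w|^2 - |x - c|^2] of the squared distances to
    the centre [w] of a putative witness sphere (radius [rho]) and to the
    centre [c] of the covering ball (radius [r]) is an affine function of [x].
    It is at least [rho^2 - r^2] at every [v_i] (outside the open witness ball,
    inside the covering ball) and below [rho^2 - r^2] at [p1] and [p2] (on the
    witness sphere, outside the covering ball).  Affinity carries the first
    bound to every point of the convex hull and the second to every point of
    the segment, so the two cannot meet. *)
From HB Require Import structures.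
From mathcomp Require Import all_boot all_order all_algebra.
From mathcomp Require Import reals.
From mathcomp Require Import ring lra.
Set Implicit Arguments. Unset Strict Implicit. Unset Printing Implicit Defensive.
Import Order.TTheory GRing.Theory Num.Theory.
Local Open Scope ring_scope.

Section PowerDifference.
Variables (R : realType) (d : nat).
Local Notation pt := 'rV[R]_d.

Definition dotv (x a : pt) : R := \sum_k x ord0 k * a ord0 k.

Lemma dotvD (x y a : pt) : dotv (x + y) a = dotv x a + dotv y a.
Proof. by rewrite /dotv -big_split; apply: eq_bigr => k _; rewrite mxE mulrDl. Qed.

Lemma dotvZ (s : R) (x a : pt) : dotv (s *: x) a = s * dotv x a.
Proof. by rewrite /dotv mulr_sumr; apply: eq_bigr => k _; rewrite mxE mulrA. Qed.

Lemma dotv_sum (m : nat) (x : 'I_m -> pt) (a : pt) :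
  dotv (\sum_i x i) a = \sum_i dotv (x i) a.
Proof.
rewrite /dotv; under eq_bigr do rewrite summxE mulr_suml.
by rewrite exchange_big.
Qed.

Lemma sqdistB_dotv (x w c : pt) :
  sqdist x w - sqdist x c = dotv x (2 *: (c - w)) + (dotv w w - dotv c c).
Proof.
rewrite /sqdist /dotv -!sumrB -big_split; apply: eq_bigr => k _ /=.
by rewrite !mxE; ring.
Qed.

Variables (w c : pt).
Local Notation pdiff x := (sqdist x w - sqdist x c).

Lemma pdiff_segment (t : R) (p1 p2 : pt) :
  pdiff ((1 - t) *: p1 + t *: p2) = (1 - t) * pdiff p1 + t * pdiff p2.
Proof. by rewrite !sqdistB_dotv dotvD !dotvZ; ring. Qed.

Lemma pdiff_convex (m : nat) (lam : 'I_m -> R) (v : 'I_m -> pt) :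
  \sum_i lam i = 1 ->
  pdiff (\sum_i lam i *: v i) = \sum_i lam i * pdiff (v i).
Proof.
move=> lam1.
under [RHS]eq_bigr do rewrite sqdistB_dotv mulrDr.
rewrite sqdistB_dotv dotv_sum big_split /= -mulr_suml lam1 mul1r.
by under eq_bigr do rewrite dotvZ.
Qed.

End PowerDifference.

Lemma convex_comb_ge (R : realFieldType) (m : nat) (lam f : 'I_m -> R) (D : R) :
  (forall i, 0 <= lam i) -> \sum_i lam i = 1 -> (forall i, D <= f i) ->
  D <= \sum_i lam i * f i.
Proof.
move=> lam0 lam1 fD; rewrite -[D]mul1r -lam1 mulr_suml.
by apply: ler_sum => i _; apply: ler_wpM2l.
Qed.

Lemma segment_comb_lt (R : realFieldType) (t a b D : R) :
  0 <= t <= 1 -> a < D -> b < D -> (1 - t) * a + t * b < D.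
Proof.
move=> /andP[t0 t1] aD bD; have [t_lt1|t_ge1] := ltrP t 1.
- have : (1 - t) * a < (1 - t) * D by rewrite ltr_pM2l ?subr_gt0.
  have : t * b <= t * D by apply: ler_wpM2l => //; exact: ltW.
  lra.
- have -> : t = 1 by lra.
  by rewrite subrr mul0r add0r mul1r.
Qed.

Lemma segment_misses_hull (R : realType) (d m : nat) (v : 'I_m -> 'rV[R]_d)
    (c w p1 p2 : 'rV[R]_d) (r rho : R) :
  (forall i, sqdist (v i) c <= r ^+ 2) -> (forall i, rho ^+ 2 <= sqdist (v i) w) ->
  r ^+ 2 < sqdist p1 c -> r ^+ 2 < sqdist p2 c ->
  sqdist p1 w = rho ^+ 2 -> sqdist p2 w = rho ^+ 2 ->
  ~ segment_meets_hull v p1 p2.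
Proof.
move=> vc vw p1c p2c p1w p2w [t [t01 [lam [lam0 [lam1 seg_hull]]]]].
set D := rho ^+ 2 - r ^+ 2.
have vD i : D <= sqdist (v i) w - sqdist (v i) c by apply: lerB.
have p1D : sqdist p1 w - sqdist p1 c < D by rewrite p1w ltrD2l ltrN2.
have p2D : sqdist p2 w - sqdist p2 c < D by rewrite p2w ltrD2l ltrN2.
have := segment_comb_lt t01 p1D p2D.
rewrite -pdiff_segment seg_hull pdiff_convex // ltNge.
by rewrite (convex_comb_ge lam0 lam1 vD).
Qed.

Theorem mainTheorem1 (R : realType) (d m : nat) (v : 'I_m -> 'rV[R]_d)
  (c : 'rV[R]_d) (r : R) (p1 p2 : 'rV[R]_d) :
  (2 <= d)%N -> (d <= m)%N ->
  min_covering_sphere v c r ->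
  r ^+ 2 < sqdist p1 c -> r ^+ 2 < sqdist p2 c ->
  segment_meets_hull v p1 p2 ->
  general_position (fun x => (exists i, x = v i) \/ x = p1 \/ x = p2) ->
  ~ exists (w : 'rV[R]_d) (rho : R),
      witness_sphere (fun x => (exists i, x = v i) \/ x = p1 \/ x = p2) p1 p2 w rho.
Proof.
move=> _ _ [[_ covered] _] p1_out p2_out meets _ [w [rho [_ [p1w [p2w empty]]]]].
have vw i : rho ^+ 2 <= sqdist (v i) w.
  by rewrite leNgt; apply/negP/empty; left; exists i.
exact: (segment_misses_hull covered vw p1_out p2_out p1w p2w meets).
Qed.
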